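(* Let $\mathcal{O}$ be a cube orientation. If $\mathcal{O}$ has property L (i.e., every L-graph $\mathcal{L}_{\mathcal{O}}(V)$, $V\in\mathrm{vert}\,\mathcal{O}$, is acyclic), then $\mathcal{O}$ is a unique sink orientation.
   Context: For sets $U,V$ let $U\oplus V=(U\cup V)\setminus(U\cap V)$, and for $U\subseteq W$ let $[U,W]=\{V: U\subseteq V\subseteq W\}$. A cube orientation is a directed graph $\mathcal{O}$ with vertex set $\mathrm{vert}\,\mathcal{O}=[U,W]$ for some $U\subseteq W$ which, for every $V\in[U,W]$ and every $i\in W\setminus U$ (the carrier), contains exactly one of the directed edges $(V,V\oplus\{i\})$ and $(V\oplus\{i\},V)$. Its outmap is $\phi_{\mathcal{O}}(V)=\{i\in W\setminus U: (V,V\oplus\{i\})\in\mathcal{O}\}$. For $V\in[U,W]$, the L-graph $\mathcal{L}_{\mathcal{O}}(V)$ is the directed graph with vertex set $W\setminus V$ and an arc $(i,j)$ for distinct $i,j\in W\setminus V$ whenever $j\in\phi_{\mathcal{O}}(V)\oplus\phi_{\mathcal{O}}(V\cup\{i\})$. $\mathcal{O}$ has property L if all its L-graphs are acyclic. A face of $\mathcal{O}$ is the subgraph induced by an interval contained in $\mathrm{vert}\,\mathcal{O}$; $\mathcal{O}$ is a unique sink orientation (USO) if every face has exactly one sink (vertex with no outgoing edge in the face). *)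

From mathcomp Require Import all_boot.
Set Implicit Arguments. Unset Strict Implicit. Unset Printing Implicit Defensive.

Section CubeOrientations.
Variable T : finType.

Definition symdiff (A B : {set T}) : {set T} := (A :|: B) :\: (A :&: B).

Definition interval (U W : {set T}) : {set {set T}} :=
  [set V : {set T} | (U \subset V) && (V \subset W)].

Definition cube_orientation (e : rel {set T}) (U W : {set T}) : Prop :=
  [/\ U \subset W,
      (forall A B : {set T}, e A B ->
         [/\ A \in interval U W, B \in interval U W &
             exists2 i, i \in W :\: U & B = symdiff A [set i]]) &
      (forall (V : {set T}) (i : T), V \in interval U W -> i \in W :\: U ->
         e V (symdiff V [set i]) (+) e (symdiff V [set i]) V)].

Definition outmap (e : rel {set T}) (U W V : {set T}) : {set T} :=
  [set i in W :\: U | e V (symdiff V [set i])].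

Definition Lgraph (e : rel {set T}) (U W V : {set T}) : rel T :=
  fun i j : T => [&& i != j, i \in W :\: V, j \in W :\: V &
                 j \in symdiff (outmap e U W V) (outmap e U W (V :|: [set i]))].

Definition acyclic (r : rel T) : Prop :=
  forall s : seq T, s != [::] -> ~~ cycle r s.

Definition property_L (e : rel {set T}) (U W : {set T}) : Prop :=
  forall V, V \in interval U W -> acyclic (Lgraph e U W V).

Definition sink_in_face (e : rel {set T}) (A B V : {set T}) : bool :=
  (V \in interval A B) && [forall X in interval A B, ~~ e V X].

Definition USO (e : rel {set T}) (U W : {set T}) : Prop :=
  forall A B : {set T}, U \subset A -> A \subset B -> B \subset W ->
    #|[set V | sink_in_face e A B V]| = 1.

End CubeOrientations.

From mathcomp Require Import all_boot.
Set Implicit Arguments. Unset Strict Implicit. Unset Printing Implicit Defensive.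

(* Szabo-Welzl: the orientation is a USO as soon as, on every face [A, B], the
   map Z |-> phi(Z) n (B \ A) is injective, hence a bijection onto the subsets
   of the carrier B \ A; the sinks of the face are then its unique vertex over
   the empty set. Injectivity is proved by induction on the dimension. Writing
   N(C) for the size of the fibre over C, injectivity of the two facets in a
   direction j gives N(C) + N(C (+) {j}) = 2. Since L(A) is acyclic, some i in
   the carrier has no arc into the carrier, i.e. phi(A + i) and phi(A) differ
   on the carrier exactly in i. So the fibres over phi(A) n (B \ A) and over
   its flip in i are both nonempty, hence of size 1, and the identity above
   propagates N = 1 to every C. *)

Section Sets.
Variable T : finType.
Implicit Types (A B C D V X Y Z : {set T}) (i j x : T).

Lemma in_symdiff A B x : (x \in symdiff A B) = (x \in A) (+) (x \in B).
Proof. by rewrite /symdiff !inE; case: (x \in A); case: (x \in B). Qed.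

Lemma in_symdiff1 A i x : (x \in symdiff A [set i]) = (x \in A) (+) (x == i).
Proof. by rewrite in_symdiff inE. Qed.

Lemma symdiff1K A i : symdiff (symdiff A [set i]) [set i] = A.
Proof. by apply/setP => x; rewrite !in_symdiff1 -addbA addbb addbF. Qed.

Lemma symdiff1_notin A i : i \notin A -> symdiff A [set i] = A :|: [set i].
Proof.
move=> iA; apply/setP => x; rewrite in_symdiff1 !inE.
by case: eqP => [-> | _]; rewrite ?(negbTE iA) ?addbF ?orbF.
Qed.

Lemma symdiff_eq0 A B : (symdiff A B == set0) = (A == B).
Proof.
apply/eqP/eqP => [/setP E | ->]; last by apply/setP => x; rewrite in_symdiff addbb inE.
apply/setP => x; move: (E x); rewrite in_symdiff inE.
by case: (x \in A); case: (x \in B).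
Qed.

Lemma in_interval A B V : (V \in interval A B) = (A \subset V) && (V \subset B).
Proof. by rewrite inE. Qed.

Lemma card_interval A B : A \subset B -> #|interval A B| = 2 ^ #|B :\: A|.
Proof.
move=> AB; rewrite -card_powerset.
have -> : interval A B = [set A :|: Y | Y in powerset (B :\: A)].
  apply/setP => V; rewrite in_interval; apply/andP/imsetP => [[AV VB] | [Y]].
    exists (V :\: A); first by rewrite inE setSD.
    apply/setP => x; rewrite !inE.
    by case: (boolP (x \in A)) => //= /(subsetP AV) ->.
  rewrite inE => YD ->; rewrite subsetUl subUset AB.
  by split=> //; exact: subset_trans YD (subsetDl _ _).
apply: card_in_imset => Y1 Y2; rewrite !inE => /subsetP Y1D /subsetP Y2D /setP E.
apply/setP => x; move: (E x); rewrite !inE.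
case: (boolP (x \in A)) => //= xA _.
by apply/idP/idP => [/Y1D | /Y2D]; rewrite inE xA.
Qed.

Lemma symdiff1_in_interval A B V i : V \in interval A B -> i \in B :\: A ->
  symdiff V [set i] \in interval A B.
Proof.
rewrite !in_interval inE => /andP[AV VB] /andP[iA iB].
apply/andP; split; apply/subsetP => x; rewrite ?in_symdiff1.
  by move=> xA; rewrite (subsetP AV) //=; apply: contraNneq iA => <-.
by case: eqP => [-> // | _]; rewrite addbF => /(subsetP VB).
Qed.

Lemma interval_symdiff_sub A B X Y : X \in interval A B -> Y \in interval A B ->
  symdiff X Y \subset B :\: A.
Proof.
rewrite !in_interval => /andP[AX XB] /andP[AY YB].
apply/subsetP => k; rewrite in_symdiff inE.
case: (boolP (k \in A)) => [kA | _ /=]; first by rewrite (subsetP AX) ?(subsetP AY).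
by case: (k \in X) / boolP => kX /=; [rewrite (subsetP XB) | move/(subsetP YB)].
Qed.

Lemma in_lower_facet A B j Z :
  (Z \in interval A (B :\ j)) = (Z \in interval A B) && (j \notin Z).
Proof. by rewrite !in_interval subsetD1 andbA. Qed.

Lemma in_upper_facet A B j Z : j \in B ->
  (Z \in interval (j |: A) B) = (Z \in interval A B) && (j \in Z).
Proof.
move=> jB; rewrite !in_interval subUset sub1set.
by case: (j \in Z); rewrite ?andbT ?andbF.
Qed.

Lemma lower_facet_carrier A B j : (B :\ j) :\: A = (B :\: A) :\ j.
Proof. by rewrite !setDDl setUC. Qed.

Lemma upper_facet_carrier A B j : B :\: (j |: A) = (B :\: A) :\ j.
Proof. by rewrite setDDl setUC. Qed.

Lemma eq_setD1 X C j : (X :\ j == C :\ j) = (X == C) || (X == symdiff C [set j]).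
Proof.
apply/eqP/orP => [/setP E | [] /eqP -> //]; last first.
  by apply/setP => x; rewrite !in_setD1 in_symdiff1; case: (x == j); rewrite ?addbF.
have E' x : x != j -> (x \in X) = (x \in C).
  by move=> xj; move: (E x); rewrite !in_setD1 xj.
case: (boolP ((j \in X) == (j \in C))) => /eqP Ej; [left | right];
  apply/eqP/setP => x; rewrite ?in_symdiff1; case: (boolP (x == j)) => [/eqP -> | /E' //].
- by [].
- by rewrite addbT; case: (j \in X) Ej; case: (j \in C).
- by rewrite addbF.
Qed.

Lemma acyclic_sink (r : rel T) D : acyclic r -> D != set0 ->
  exists2 i, i \in D & {in D, forall j, ~~ r i j}.
Proof.
move=> acyc /set0Pn[x0 x0D].
case: (boolP [exists i in D, [forall j in D, ~~ r i j]]).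
  by case/exists_inP => i iD /forall_inP; exists i.
move/exists_inPn => no_sink; exfalso.
pose f i := odflt i [pick j in D | r i j].
have f_arc i : i \in D -> (f i \in D) && r i (f i).
  move=> iD; rewrite /f; case: pickP => [j // | none] /=.
  have /forall_inPn[j jD /negbNE rij] := no_sink i iD.
  by move: (none j); rewrite jD rij.
have iter_in k i : i \in D -> iter k f i \in D.
  by elim: k => //= k IHk /IHk /f_arc/andP[].
(* [z] lies on the periodic part of the [f]-orbit of [x0]. *)
pose z := iter (order f x0) f x0.
have /trajectP[k lt_k_order z_def] : looping f x0 (order f x0) by apply: looping_order.
have z_cycle : fcycle f (orbit f z).
  apply/(orbitPcycle 0 3); exists (order f x0 - k).-1.
  by rewrite prednK ?subn_gt0 // /z {1}z_def -iterD subnK ?(ltnW lt_k_order).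
have orbit_n0 : orbit f z != [::] by apply/eqP => E; have := in_orbit f z; rewrite E.
apply: (negP (acyc _ orbit_n0)).
apply: (@sub_in_cycle _ (mem D) (frel f)) z_cycle.
  by move=> a b aD _ /eqP <-; case/andP: (f_arc a aD).
by apply/allP => y /trajectP[m _ ->]; apply/iter_in/iter_in.
Qed.

Lemma flip_sum2_const1 D (N : {set T} -> nat) (c0 : {set T}) :
  (forall j C, j \in D -> C \subset D -> N C + N (symdiff C [set j]) = 2) ->
  c0 \subset D -> N c0 = 1 -> forall C, C \subset D -> N C = 1.
Proof.
move=> N2 c0D Nc0 C; have [n] := ubnP #|symdiff C c0|.
elim: n C => // n IH C lt_n CD.
have [/eqP | [j jCc0]] := set_0Vmem (symdiff C c0).
  by rewrite symdiff_eq0 => /eqP ->.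
have jD : j \in D.
  move: jCc0; rewrite in_symdiff.
  by case: (boolP (j \in C)) => /= [/(subsetP CD) | _ /(subsetP c0D)].
have C'D : symdiff C [set j] \subset D.
  apply/subsetP => x; rewrite in_symdiff1.
  by case: eqP => [-> // | _]; rewrite addbF => /(subsetP CD).
have NC' : N (symdiff C [set j]) = 1.
  apply: IH C'D; rewrite (cardsD1 j) jCc0 add1n ltnS in lt_n.
  apply: leq_trans lt_n; apply: subset_leq_card; apply/subsetP => x.
  rewrite in_setD1 !in_symdiff in_set1; case: eqP => [-> | _]; last by rewrite addbF.
  by move: jCc0; rewrite in_symdiff; case: (j \in C); case: (j \in c0).
by move: (N2 j _ jD C'D); rewrite symdiff1K NC' add1n => -[].
Qed.

End Sets.

Section Fibres.
Variables (T : finType) (phi : {set T} -> {set T}).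
Implicit Types (A B C X Y Z : {set T}) (j : T).

Definition fibre A B C : {set {set T}} :=
  [set Z in interval A B | phi Z :&: (B :\: A) == C].

Definition face_injective A B : Prop :=
  {in interval A B &, injective (fun Z => phi Z :&: (B :\: A))}.

Lemma in_fibre A B C Z :
  (Z \in fibre A B C) = (Z \in interval A B) && (phi Z :&: (B :\: A) == C).
Proof. by rewrite inE. Qed.

Lemma card_fibre_injective A B C : A \subset B -> face_injective A B ->
  C \subset B :\: A -> #|fibre A B C| = 1.
Proof.
move=> AB inj CD; pose g Z := phi Z :&: (B :\: A).
have g_onto : g @: interval A B = powerset (B :\: A).
  apply/eqP; rewrite eqEcard card_in_imset // card_interval // card_powerset.
  rewrite leqnn andbT.
  by apply/subsetP => _ /imsetP[Z _ ->]; rewrite inE subsetIr.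
have /imsetP[Z ZAB C_def] : C \in g @: interval A B by rewrite g_onto inE.
apply/eqP/cards1P; exists Z; apply/setP => Y; rewrite in_fibre in_set1.
apply/andP/eqP => [[YAB /eqP gY] | ->]; last by rewrite ZAB C_def.
by apply: inj => //=; rewrite gY C_def.
Qed.

Lemma card_fibre1_injective A B :
  (forall C, C \subset B :\: A -> #|fibre A B C| = 1) -> face_injective A B.
Proof.
move=> N1 X Y XAB YAB gXY.
have /card_le1_eqP : #|fibre A B (phi X :&: (B :\: A))| <= 1 by rewrite N1 ?subsetIr.
by apply; rewrite in_fibre ?XAB ?YAB -?gXY eqxx.
Qed.

Lemma card_fibre_facets A B C j : A \subset B -> j \in B :\: A ->
  face_injective A (B :\ j) -> face_injective (j |: A) B -> C \subset B :\: A ->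
  #|fibre A B C| + #|fibre A B (symdiff C [set j])| = 2.
Proof.
move=> AB jD inj0 inj1 CD; have /setDP[jB jA] := jD.
have CjD : C :\ j \subset (B :\: A) :\ j by apply: setSD.
have card0 : #|fibre A (B :\ j) (C :\ j)| = 1.
  by apply: card_fibre_injective; rewrite ?lower_facet_carrier // subsetD1 AB.
have card1 : #|fibre (j |: A) B (C :\ j)| = 1.
  by apply: card_fibre_injective; rewrite ?upper_facet_carrier // subUset sub1set jB.
have split_fibres : fibre A B C :|: fibre A B (symdiff C [set j]) =
                    fibre A (B :\ j) (C :\ j) :|: fibre (j |: A) B (C :\ j).
  apply/setP => Z; rewrite !in_setU !in_fibre in_lower_facet in_upper_facet //.
  rewrite lower_facet_carrier upper_facet_carrier [phi Z :&: (_ :\ j)]setIDA eq_setD1.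
  by case: (Z \in interval A B); case: (j \in Z); case: (_ == C); case: (_ == _).
have CCj : C != symdiff C [set j].
  by apply/eqP => /setP/(_ j); rewrite in_symdiff1 eqxx addbT; case: (j \in C).
have disjC : fibre A B C :&: fibre A B (symdiff C [set j]) = set0.
  apply/setP => Z; rewrite in_setI !in_fibre in_set0.
  by apply/negP => /andP[/andP[_ /eqP ->] /andP[_]]; apply/negP.
have disj01 : fibre A (B :\ j) (C :\ j) :&: fibre (j |: A) B (C :\ j) = set0.
  apply/setP => Z; rewrite in_setI !in_fibre in_lower_facet in_upper_facet // in_set0.
  by case: (j \in Z); rewrite ?andbF.
have card_disjU (X Y : {set {set T}}) : X :&: Y = set0 -> #|X :|: Y| = #|X| + #|Y|.
  by move=> XY0; rewrite cardsU XY0 cards0 subn0.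
by rewrite -card_disjU // split_fibres card_disjU // card0 card1.
Qed.

End Fibres.

Section Orientation.
Variables (T : finType) (e : rel {set T}) (U W : {set T}).
Hypothesis orientation : cube_orientation e U W.
Local Notation phi := (outmap e U W).
Implicit Types (A B C D V X : {set T}) (i j : T).

Lemma in_outmap V i : (i \in phi V) = (i \in W :\: U) && e V (symdiff V [set i]).
Proof. by rewrite inE. Qed.

Lemma outmap_symdiff1 V i : V \in interval U W -> i \in W :\: U ->
  (i \in phi (symdiff V [set i])) = (i \notin phi V).
Proof.
move=> VI iWU; rewrite !in_outmap iWU symdiff1K /=.
by case: orientation => _ _ /(_ V i VI iWU); case: (e V _); case: (e _ V).
Qed.

Lemma sink_in_faceE A B V :
  sink_in_face e A B V = (V \in fibre phi A B set0).
Proof.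
rewrite /sink_in_face in_fibre.
case VAB: (V \in interval A B) => //=.
apply/forall_inP/eqP => [no_arc | no_out X XAB].
  apply/setP => i; rewrite in_setI in_set0 in_outmap.
  apply/negP => /andP[/andP[iWU eVi] iD].
  by move: (no_arc _ (symdiff1_in_interval VAB iD)); rewrite eVi.
apply/negP => eVX.
case: orientation => _ /(_ V X eVX) [_ _ [i iWU X_def]] _.
have iD : i \in B :\: A.
  apply: (subsetP (interval_symdiff_sub VAB XAB)).
  by rewrite X_def in_symdiff in_symdiff1 eqxx addbT addbN addbb.
by move/setP: no_out => /(_ i); rewrite in_setI in_set0 iD in_outmap iWU -X_def eVX.
Qed.

Lemma USO_of_faces_injective :
  (forall A B, U \subset A -> A \subset B -> B \subset W -> face_injective phi A B) ->
  USO e U W.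
Proof.
move=> inj A B UA AB BW.
rewrite -(card_fibre_injective AB (inj A B UA AB BW) (sub0set _)).
by apply: eq_card => V; rewrite inE sink_in_faceE.
Qed.

Lemma outmap_setU1_no_arc V D i : V \in interval U W -> D \subset W :\: V ->
  i \in D -> {in D, forall j, ~~ Lgraph e U W V i j} ->
  phi (V :|: [set i]) :&: D = symdiff (phi V :&: D) [set i].
Proof.
move=> VI DWV iD no_arc; have /setDP[iW iV] := subsetP DWV i iD.
have iWU : i \in W :\: U.
  rewrite inE iW andbT; apply: contra iV.
  by move: VI; rewrite in_interval => /andP[/subsetP UV _] /UV.
apply/setP => x; rewrite in_symdiff1 !in_setI.
have [-> | xi] := eqVneq x i.
  by rewrite iD !andbT -symdiff1_notin // outmap_symdiff1 // addbT.
rewrite addbF; case: (boolP (x \in D)) => xD; rewrite ?andbF ?andbT //.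
move: (no_arc x xD); rewrite /Lgraph eq_sym xi (subsetP DWV) // (subsetP DWV) //=.
by rewrite in_symdiff; case: (x \in phi V); case: (x \in phi _).
Qed.

Hypothesis L_acyclic : property_L e U W.

Lemma face_injective_of_facets A B : U \subset A -> A \subset B -> B \subset W ->
  (forall j, j \in B :\: A ->
     face_injective phi A (B :\ j) /\ face_injective phi (j |: A) B) ->
  face_injective phi A B.
Proof.
move=> UA AB BW facets_inj.
have [/eqP | D_n0] := eqVneq (B :\: A) set0.
  rewrite setD_eq0 => BA X Y; rewrite !in_interval => /andP[AX XB] /andP[AY YB] _.
  apply/eqP; rewrite eqEsubset (subset_trans XB (subset_trans BA AY)).
  exact: subset_trans YB (subset_trans BA AX).
have AI : A \in interval U W by rewrite in_interval UA (subset_trans AB BW).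
have [i iD no_arc] := acyclic_sink (L_acyclic AI) D_n0.
have /setDP[iB _] := iD.
pose N C := #|fibre phi A B C|.
have N2 j C : j \in B :\: A -> C \subset B :\: A -> N C + N (symdiff C [set j]) = 2.
  by move=> jD; have [] := facets_inj j jD; exact: card_fibre_facets.
have N_pos C Z : Z \in interval A B -> phi Z :&: (B :\: A) = C -> 0 < N C.
  by move=> ZAB ZC; apply/card_gt0P; exists Z; rewrite in_fibre ZAB ZC eqxx.
set c0 := phi A :&: (B :\: A).
have c0D : c0 \subset B :\: A by apply: subsetIr.
have N_c0_pos : 0 < N c0 by apply: (N_pos _ A); rewrite ?in_interval ?subxx.
have N_c1_pos : 0 < N (symdiff c0 [set i]).
  apply: (N_pos _ (A :|: [set i])).
    by rewrite in_interval subsetUl subUset AB sub1set.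
  by apply: outmap_setU1_no_arc; rewrite ?setSD.
have Nc0 : N c0 = 1.
  apply/eqP; rewrite eqn_leq N_c0_pos andbT -ltnS -(N2 i c0 iD c0D).
  by rewrite -[X in X < _]addn0 ltn_add2l.
by apply: card_fibre1_injective; exact: flip_sum2_const1 N2 c0D Nc0.
Qed.

Lemma faces_injective A B : U \subset A -> A \subset B -> B \subset W ->
  face_injective phi A B.
Proof.
have [n] := ubnP #|B :\: A|; elim: n A B => // n IH A B lt_n UA AB BW.
apply: face_injective_of_facets => // j jD; have /setDP[jB jA] := jD.
have lt_facet : #|(B :\: A) :\ j| < n by rewrite (cardsD1 j) jD add1n ltnS in lt_n.
split; apply: IH.
- by rewrite lower_facet_carrier.
- by [].
- by rewrite subsetD1 AB.
- exact: subset_trans (subsetDl _ _) BW.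
- by rewrite upper_facet_carrier.
- exact: subset_trans UA (subsetUr _ _).
- by rewrite subUset sub1set jB.
- by [].
Qed.

End Orientation.

Theorem theorem3p3 (T : finType) (e : rel {set T}) (U W : {set T}) :
  cube_orientation e U W -> property_L e U W -> USO e U W.
Proof.
move=> orientation L_acyclic.
exact: USO_of_faces_injective orientation (faces_injective orientation L_acyclic).
Qed.
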